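(* Fix $m\in\mathbb N$. There is a constant $C_m>0$ such that for all $v,w\in F(t_1,t_2)$ with $|v|,|w|\le m$ and all $N\in\mathbb N$, the word $$\big[v(y_1,y_2),\,w(x_1,x_2)^N\big]\,\big[v(x_1,x_2),\,w(y_1,y_2)^N\big]^{-1}\in F(x_1,x_2,y_1,y_2)$$ represents the trivial element of $K$ and has area at most $C_m\cdot N^2$.
   Context: Let $F_2^{(a)},F_2^{(b)},F_2^{(c)}$ be free groups with bases $a_1,a_2$; $b_1,b_2$; $c_1,c_2$, let $\psi\colon F_2^{(a)}\times F_2^{(b)}\times F_2^{(c)}\to\mathbb Z^2$ send $a_i,b_i,c_i\mapsto e_i$, and $K=\ker\psi$. $K$ is generated by $x_i=a_ic_i^{-1}$, $y_i=b_ic_i^{-1}$ ($i=1,2$), with finite presentation $\langle x_1,x_2,y_1,y_2\mid [x_1,y_1],[x_2,y_2],[x_1^{\epsilon_1},y_2^{\epsilon_2}][x_2^{\epsilon_2},y_1^{\epsilon_1}]\ (\epsilon_1,\epsilon_2\in\{\pm1\})\rangle$, where $[g,h]=ghg^{-1}h^{-1}$. Area is with respect to this presentation: the least number of conjugates of relators or their inverses whose product is the given word in $F(x_1,x_2,y_1,y_2)$. For $w\in F(t_1,t_2)$, $w(u_1,u_2)$ is the image under $t_i\mapsto u_i$, and $|w|$ is word length. *)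

(* Free groups as words over signed letters; equality in the
   free group = equality of freely reduced forms. *)
From mathcomp Require Import all_boot.
Set Implicit Arguments. Unset Strict Implicit. Unset Printing Implicit Defensive.

(* A letter of F(g_0,...,g_{n-1}): (index, exponent sign); true = +1, false = -1. *)
Definition letter (n : nat) := ('I_n * bool)%type.
Definition word (n : nat) := seq (letter n).

Definition linv {n} (a : letter n) : letter n := (a.1, ~~ a.2).
Definition winv {n} (w : word n) : word n := rev (map linv w).

Fixpoint freered {n} (w : word n) : word n :=
  match w with
  | [::] => [::]
  | a :: s =>
      let r := freered s in
      match r with
      | b :: r' => if b == linv a then r' else a :: r
      | [::] => [:: a]
      end
  end.

Definition feq {n} (u v : word n) : Prop := freered u = freered v.

Definition wpow {n} (w : word n) (N : nat) : word n := flatten (nseq N w).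
Definition comm {n} (g h : word n) : word n := g ++ h ++ winv g ++ winv h.
Definition gpow {n} (w : word n) (e : bool) : word n := if e then w else winv w.
Definition gen {n} (i : 'I_n) : word n := [:: (i, true)].

(* w(u1,u2) : substitution t_1 |-> u1, t_2 |-> u2 for w in F(t1,t2) *)
Definition subst {m} (w : word 2) (u1 u2 : word m) : word m :=
  flatten [seq (let u := if nat_of_ord a.1 == 0 then u1 else u2 in
                if a.2 then u else winv u) | a <- w].

Definition x1 : word 4 := gen (@Ordinal 4 0 isT).
Definition x2 : word 4 := gen (@Ordinal 4 1 isT).
Definition y1 : word 4 := gen (@Ordinal 4 2 isT).
Definition y2 : word 4 := gen (@Ordinal 4 3 isT).

Definition relK : seq (word 4) :=
  [:: comm x1 y1; comm x2 y2] ++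
  [seq comm (gpow x1 e.1) (gpow y2 e.2) ++ comm (gpow x2 e.2) (gpow y1 e.1)
  | e <- [:: (true, true); (true, false); (false, true); (false, false)]].

Definition prod_conj (l : seq (word 4 * word 4 * bool)) : word 4 :=
  flatten [seq t.1.1 ++ gpow t.1.2 t.2 ++ winv t.1.1 | t <- l].

Definition area_le (w : word 4) (n : nat) : Prop :=
  exists l : seq (word 4 * word 4 * bool),
    all (fun t => t.1.2 \in relK) l /\ size l <= n /\ feq (prod_conj l) w.

Definition trivial_in_K (w : word 4) : Prop := exists n, area_le w n.

From HB Require Import structures.
From mathcomp Require Import all_boot ssralg ssrint zify.
From Stdlib Require Import ClassicalEpsilon.
Set Implicit Arguments. Unset Strict Implicit. Unset Printing Implicit Defensive.
Local Open Scope quotient_scope.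

(* Write P = w(x), Q = w(y), A1 = v(y) P v(y)^-1, A2 = v(x) Q v(x)^-1 and
   E = Q^-1 P.  In K, P commutes with Q, A1 = A2 E, and E commutes with A2.
   These follow from the relations: induction gives [x1^n, y2^m] = [y1^n, x2^m]
   for all integers n, m, and conjugation by x_i and by y_i agree on the
   subgroup generated by these commutators, so induction on words gives
   [v(y), w(x)] = [v(x), w(y)].  Each identity has finite area, and only
   finitely many pairs (v, w) have length at most m, so one constant K bounds
   all of them.  Up to free reduction the word is A1^N P^-N Q^N A2^-N.
   Rewriting A1^N as (A2 E)^N costs N K relators; moving factors past one
   another turns (A2 E)^N into A2^N E^N and E^N = (Q^-1 P)^N into Q^-N P^N at a
   cost of N^2 K each.  What remains, A2^N Q^-N P^N P^-N Q^N A2^-N, cancels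
   freely. *)

Section FreeReduction.
Variable n : nat.
Implicit Types (a : letter n) (u v w : word n).

Definition red_step a (r : word n) : word n :=
  if r is b :: r' then (if b == linv a then r' else a :: r) else [:: a].

Lemma freered_cons a u : freered (a :: u) = red_step a (freered u).
Proof. by []. Qed.

Lemma linvK : involutive (@linv n).
Proof. by case=> i s; rewrite /linv negbK. Qed.

Fixpoint reduced w : bool :=
  if w is a :: ((b :: _) as u) then (b != linv a) && reduced u else true.

Lemma reduced_behead a u : reduced (a :: u) -> reduced u.
Proof. by case: u => // b u /andP[]. Qed.

Lemma reduced_freered w : reduced (freered w).
Proof.
elim: w => //= a u; rewrite -/(freered u).
case: (freered u) => [|b r] //= red_br.
by case: ifP => [_|/negbT nb] /=; [apply: reduced_behead red_br | rewrite nb].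
Qed.

Lemma freered_id w : reduced w -> freered w = w.
Proof.
elim: w => //= a u IHu red_au; rewrite -/(freered u) IHu; last exact: reduced_behead red_au.
by case: u red_au {IHu} => //= b u /andP[/negbTE ->].
Qed.

Lemma freered_cancel a u : freered (a :: linv a :: u) = freered u.
Proof.
rewrite !freered_cons /=.
have := reduced_freered u; case: (freered u) => [|b r] /=; first by rewrite eqxx.
rewrite linvK; case: eqP => [->|_] /=; last by rewrite eqxx.
by case: r => //= c r /andP[/negbTE ->].
Qed.

Lemma freered_catr u v : freered (u ++ v) = freered (u ++ freered v).
Proof.
elim: u => [|a u IHu] /=; first by rewrite (freered_id (reduced_freered v)).
by rewrite -!/(freered _) IHu.
Qed.

Lemma freered_catl u v : freered (u ++ v) = freered (freered u ++ v).
Proof.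
elim: u => [|a u IHu] //=; rewrite -!/(freered _) IHu.
case: (freered u) => [|b r] //=; case: eqP => [->|] //.
by rewrite -/(freered (a :: linv a :: _)) freered_cancel.
Qed.

Lemma feq_refl u : feq u u. Proof. by []. Qed.

Lemma feq_sym u v : feq u v -> feq v u. Proof. by []. Qed.

Lemma feq_trans u v w : feq u v -> feq v w -> feq u w.
Proof. by rewrite /feq => ->. Qed.

Lemma feq_cat u u' v v' : feq u u' -> feq v v' -> feq (u ++ v) (u' ++ v').
Proof.
rewrite /feq freered_catl freered_catr (freered_catl u') (freered_catr _ v').
by move=> -> ->.
Qed.

Lemma winv_cat u v : winv (u ++ v) = winv v ++ winv u.
Proof. by rewrite /winv map_cat rev_cat. Qed.

Lemma winv_cons a u : winv (a :: u) = winv u ++ [:: linv a].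
Proof. by rewrite -cat1s winv_cat. Qed.

Lemma winvK : involutive (@winv n).
Proof. by move=> u; rewrite /winv map_rev revK -map_comp (eq_map linvK) map_id. Qed.

Lemma feq_catV u : feq (u ++ winv u) [::].
Proof.
elim: u => [|a u IHu] //; rewrite winv_cons /feq /= -/(freered _) catA freered_catl.
by rewrite IHu /= eqxx.
Qed.

Lemma feq_catVl u : feq (winv u ++ u) [::].
Proof. by rewrite -{2}(winvK u); apply: feq_catV. Qed.

Lemma feq_cancel x u y : feq (x ++ u ++ winv u ++ y) (x ++ y).
Proof.
rewrite [u ++ _]catA; apply: feq_cat => //.
by rewrite /feq freered_catl (feq_catV u : freered _ = [::]).
Qed.

Lemma feq_cancelV x u y : feq (x ++ winv u ++ u ++ y) (x ++ y).
Proof. by rewrite -{2}(winvK u); apply: feq_cancel. Qed.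

Lemma feq_winv u v : feq u v -> feq (winv u) (winv v).
Proof.
move=> uv; apply: (@feq_trans _ (winv u ++ v ++ winv v)).
  by apply: feq_sym; have := feq_cancel (winv u) v [::]; rewrite !cats0.
apply: (@feq_trans _ (winv u ++ u ++ winv v)).
  by apply: feq_cat => //; apply: feq_cat.
exact: (feq_cancelV [::]).
Qed.

End FreeReduction.

Section Area.
Implicit Types (u v w g : word 4) (l : seq (word 4 * word 4 * bool)).

Lemma prod_conj_cat l1 l2 : prod_conj (l1 ++ l2) = prod_conj l1 ++ prod_conj l2.
Proof. by rewrite /prod_conj map_cat flatten_cat. Qed.

Lemma prod_conj_cons t l :
  prod_conj (t :: l) = (t.1.1 ++ gpow t.1.2 t.2 ++ winv t.1.1) ++ prod_conj l.
Proof. by []. Qed.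

Lemma area_le_feq w w' k : feq w w' -> area_le w k -> area_le w' k.
Proof.
by move=> ww' [l [rell [sizel eql]]]; exists l; do !split => //; apply: feq_trans ww'.
Qed.

Lemma area_le_leq w k k' : k <= k' -> area_le w k -> area_le w k'.
Proof.
by move=> kk' [l [rell [sizel eql]]]; exists l; do !split => //; apply: leq_trans kk'.
Qed.

Lemma area_le_nil : area_le [::] 0.
Proof. by exists [::]. Qed.

Lemma area_le_rel r : r \in relK -> area_le r 1.
Proof. by move=> relr; exists [:: ([::], r, true)]; rewrite /= relr /prod_conj /= !cats0. Qed.

Lemma area_le_cat w1 w2 k1 k2 :
  area_le w1 k1 -> area_le w2 k2 -> area_le (w1 ++ w2) (k1 + k2).
Proof.
move=> [l1 [rel1 [size1 eq1]]] [l2 [rel2 [size2 eq2]]].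
exists (l1 ++ l2); rewrite all_cat rel1 rel2 size_cat leq_add // prod_conj_cat.
by do !split; apply: feq_cat.
Qed.

Lemma area_le_conj g w k : area_le w k -> area_le (g ++ w ++ winv g) k.
Proof.
move=> [l [rell [sizel eql]]].
exists [seq (g ++ t.1.1, t.1.2, t.2) | t <- l]; rewrite all_map size_map.
split; first by apply: sub_all rell => t.
split=> //; apply: (@feq_trans _ _ (g ++ prod_conj l ++ winv g)); last first.
  by apply: feq_cat => //; apply: feq_cat.
elim: l {rell sizel eql} => [|t l IHl] /=; first exact/feq_sym/feq_catV.
rewrite !prod_conj_cons /= winv_cat.
apply: (@feq_trans _ _ ((g ++ t.1.1 ++ gpow t.1.2 t.2 ++ winv t.1.1 ++ winv g) ++
                          (g ++ prod_conj l ++ winv g))).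
  by apply: feq_cat => //; rewrite -!catA.
have := feq_cancelV (g ++ t.1.1 ++ gpow t.1.2 t.2 ++ winv t.1.1) g (prod_conj l ++ winv g).
by rewrite -!catA.
Qed.

Lemma winv_gpow w e : winv (gpow w e) = gpow w (~~ e).
Proof. by case: e => //=; rewrite winvK. Qed.

Lemma area_le_winv w k : area_le w k -> area_le (winv w) k.
Proof.
move=> [l [rell [sizel eql]]].
exists (rev [seq (t.1.1, t.1.2, ~~ t.2) | t <- l]).
rewrite all_rev all_map size_rev size_map; split; first by apply: sub_all rell => t.
split=> //.
suff -> : prod_conj (rev [seq (t.1.1, t.1.2, ~~ t.2) | t <- l]) = winv (prod_conj l).
  exact: feq_winv.
elim: l {rell sizel eql} => [|t l IHl] //=.
rewrite rev_cons -cats1 prod_conj_cat IHl prod_conj_cons /= !winv_cat winvK winv_gpow.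
by rewrite /prod_conj /= !cats0 !catA.
Qed.

Definition area_eq k u v := area_le (u ++ winv v) k.

Lemma area_eq_feq u v : feq u v -> area_eq 0 u v.
Proof.
move=> uv; apply: area_le_feq area_le_nil; apply: feq_sym.
by apply: feq_trans (feq_catV v); apply: feq_cat.
Qed.

Lemma area_eq_refl u : area_eq 0 u u.
Proof. exact: area_eq_feq. Qed.

Lemma area_eq_leq k k' u v : k <= k' -> area_eq k u v -> area_eq k' u v.
Proof. exact: area_le_leq. Qed.

Lemma area_eq_sym k u v : area_eq k u v -> area_eq k v u.
Proof. by move/area_le_winv; rewrite winv_cat winvK. Qed.

Lemma area_eq_trans k1 k2 u v w :
  area_eq k1 u v -> area_eq k2 v w -> area_eq (k1 + k2) u w.
Proof.
move=> uv vw; apply: area_le_feq (area_le_cat uv vw).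
by have := feq_cancelV u v (winv w); rewrite -!catA.
Qed.

Lemma area_eq_cat k1 k2 u u' v v' :
  area_eq k1 u u' -> area_eq k2 v v' -> area_eq (k1 + k2) (u ++ v) (u' ++ v').
Proof.
move=> uu' vv'; rewrite addnC; apply: area_le_feq (area_le_cat (area_le_conj u vv') uu').
have := feq_cancelV (u ++ v ++ winv v') u (winv u'); rewrite winv_cat -!catA; apply.
Qed.

Lemma area_eq_catl k u v v' : area_eq k v v' -> area_eq k (u ++ v) (u ++ v').
Proof. exact: (area_eq_cat (area_eq_refl u)). Qed.

Lemma area_eq_catr k u u' v : area_eq k u u' -> area_eq k (u ++ v) (u' ++ v).
Proof. by move/area_eq_cat/(_ (area_eq_refl v)); rewrite addn0. Qed.

Lemma area_eq_feql k u u' v : feq u u' -> area_eq k u' v -> area_eq k u v.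
Proof. by move/area_eq_feq; apply: area_eq_trans. Qed.

Lemma area_eq_feqr k u v v' : area_eq k u v' -> feq v v' -> area_eq k u v.
Proof. by move=> uv' /feq_sym/area_eq_feq/(area_eq_trans uv'); rewrite addn0. Qed.

Lemma area_eq_winv k u v : area_eq k u v -> area_eq k (winv u) (winv v).
Proof.
move=> /area_le_winv/(area_le_conj (winv u)); rewrite /area_eq !winv_cat !winvK.
apply: area_le_feq; have := feq_cancelV (winv u ++ v) u [::].
by rewrite !cats0 -!catA.
Qed.

Lemma area_eq_wpow k u v N : area_eq k u v -> area_eq (N * k) (wpow u N) (wpow v N).
Proof.
move=> uv; elim: N => [|N IHN]; first exact: area_eq_refl.
by rewrite mulSn; apply: area_eq_cat.
Qed.

End Area.

Section PresentedGroup.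
Implicit Types u v w : word 4.

Definition eqK u v := exists k, area_eq k u v.

Lemma eqK_refl u : eqK u u. Proof. by exists 0; apply: area_eq_refl. Qed.

Lemma eqK_feq u v : feq u v -> eqK u v.
Proof. by move=> uv; exists 0; apply: area_eq_feq. Qed.

Lemma eqK_sym u v : eqK u v -> eqK v u.
Proof. by case=> k uv; exists k; apply: area_eq_sym. Qed.

Lemma eqK_trans u v w : eqK u v -> eqK v w -> eqK u w.
Proof. by case=> k1 uv [k2 vw]; exists (k1 + k2); apply: area_eq_trans vw. Qed.

Lemma eqK_cat u u' v v' : eqK u u' -> eqK v v' -> eqK (u ++ v) (u' ++ v').
Proof. by case=> k1 uu' [k2 vv']; exists (k1 + k2); apply: area_eq_cat. Qed.

Lemma eqK_winv u v : eqK u v -> eqK (winv u) (winv v).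
Proof. by case=> k uv; exists k; apply: area_eq_winv. Qed.

(* [eqK] is not decidable; {eq_quot _} needs a boolean relation, so we decide
   it classically. *)
Definition eqKb u v : bool := if excluded_middle_informative (eqK u v) then true else false.

Lemma eqKbP u v : reflect (eqK u v) (eqKb u v).
Proof. by rewrite /eqKb; case: excluded_middle_informative => uv; constructor. Qed.

Lemma eqKb_refl : reflexive eqKb. Proof. by move=> u; apply/eqKbP/eqK_refl. Qed.

Lemma eqKb_sym : symmetric eqKb.
Proof. by move=> u v; apply/eqKbP/eqKbP; apply: eqK_sym. Qed.

Lemma eqKb_trans : transitive eqKb.
Proof. by move=> v u w /eqKbP uv /eqKbP vw; apply/eqKbP/(eqK_trans uv vw). Qed.

Canonical eqKb_equiv := EquivRel eqKb eqKb_refl eqKb_sym eqKb_trans.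

(* The group presented by relK.  Identities proved by group calculus in Kpres
   become area bounds again through [eqK_toK]. *)
Definition Kpres := {eq_quot eqKb}.
HB.instance Definition _ := Choice.on Kpres.

Definition toK : word 4 -> Kpres := \pi.

Lemma eqK_toK u v : toK u = toK v <-> eqK u v.
Proof. by split=> [/eqmodP/eqKbP | /eqKbP/eqmodP]. Qed.

Lemma eqK_repr u : eqK (repr (toK u)) u.
Proof. by apply/eqK_toK; rewrite /toK reprK. Qed.

Definition mulK (a b : Kpres) : Kpres := toK (repr a ++ repr b).
Definition invK (a : Kpres) : Kpres := toK (winv (repr a)).
Definition oneK : Kpres := toK [::].

Lemma mulK_toK u v : mulK (toK u) (toK v) = toK (u ++ v).
Proof. by apply/eqK_toK/eqK_cat; apply: eqK_repr. Qed.

Lemma invK_toK u : invK (toK u) = toK (winv u).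
Proof. by apply/eqK_toK/eqK_winv/eqK_repr. Qed.

Lemma toK_repr (a : Kpres) : toK (repr a) = a.
Proof. exact: reprK. Qed.

Lemma mulKA : associative mulK.
Proof. by move=> a b c; rewrite -[a]toK_repr -[b]toK_repr -[c]toK_repr !mulK_toK catA. Qed.

Lemma mul1K : left_id oneK mulK.
Proof. by move=> a; rewrite -[a]toK_repr mulK_toK. Qed.

Lemma mulK1 : right_id oneK mulK.
Proof. by move=> a; rewrite -[a]toK_repr mulK_toK cats0. Qed.

Lemma mulVK : left_inverse oneK invK mulK.
Proof.
by move=> a; rewrite -[a]toK_repr invK_toK mulK_toK; apply/eqK_toK/eqK_feq/feq_catVl.
Qed.

Lemma mulKV : right_inverse oneK invK mulK.
Proof.
by move=> a; rewrite -[a]toK_repr invK_toK mulK_toK; apply/eqK_toK/eqK_feq/feq_catV.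
Qed.

HB.instance Definition _ := isGroup.Build Kpres mulKA mul1K mulK1 mulVK mulKV.

Lemma toK_cat u v : toK (u ++ v) = (toK u * toK v)%g.
Proof. exact/esym/mulK_toK. Qed.

Lemma toK_winv u : toK (winv u) = (toK u)^-1%g.
Proof. exact/esym/invK_toK. Qed.

End PresentedGroup.

Ltac gsimpl := rewrite ?invgM ?invgK ?mulgA;
  repeat rewrite ?mulgK ?mulgVK ?mulgV ?mulVg ?mul1g ?mulg1 ?invg1 ?mulgA.

Section GroupIdentities.
Local Open Scope group_scope.
Variable G : groupType.
Implicit Types (x y b h k M : G) (e : bool).

(* The paper's commutator; MathComp's [~ x, y] is x^-1 y^-1 x y. *)
Definition gcomm x y : G := x * y * x^-1 * y^-1.
Definition signpow x e : G := if e then x else x^-1.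
Definition expgz x (n : int) : G :=
  match n with Posz k => x ^+ k | Negz k => x^-1 ^+ k.+1 end.
Definition zsign e : int := if e then 1%R else (-1)%R.
Definition conj_agree x y M := x * M * x^-1 = y * M * y^-1.

Lemma conj_invg x h : x * h^-1 * x^-1 = (x * h * x^-1)^-1.
Proof. by gsimpl. Qed.

Lemma gcommV x y : (gcomm x y)^-1 = gcomm y x.
Proof. by rewrite /gcomm; gsimpl. Qed.

Lemma gcommMl x h k : gcomm (x * h) k = x * gcomm h k * x^-1 * gcomm x k.
Proof. by rewrite /gcomm; gsimpl. Qed.

Lemma gcommMr x h k : gcomm x (h * k) = gcomm x h * (h * gcomm x k * h^-1).
Proof. by rewrite /gcomm; gsimpl. Qed.

Lemma gcomm1g x : gcomm 1 x = 1. Proof. by rewrite /gcomm; gsimpl. Qed.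
Lemma gcommg1 x : gcomm x 1 = 1. Proof. by rewrite /gcomm; gsimpl. Qed.

Lemma conj_gcomm x h k : x * gcomm h k * x^-1 = gcomm (x * h) k * (gcomm x k)^-1.
Proof. by rewrite gcommMl mulgK. Qed.

Lemma gcomm_eq1P x y : reflect (commute x y) (gcomm x y == 1).
Proof.
apply: (iffP eqP) => [xy1|xy]; last by rewrite /gcomm xy; gsimpl.
by rewrite /commute -[y * x]mul1g -xy1 /gcomm; gsimpl.
Qed.

Lemma commute_signpow x y e1 e2 : commute x y -> commute (signpow x e1) (signpow y e2).
Proof.
have commuteVl x' y' : commute x' y' -> commute x'^-1 y'.
  by move/commute_sym/commuteV/commute_sym.
by case: e1; case: e2 => /= xy; do ?[apply: commuteV]; do ?[apply: commuteVl].
Qed.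

Lemma signpowV x e : signpow x^-1 e = signpow x (~~ e).
Proof. by case: e; rewrite /= ?invgK. Qed.

Lemma expgz_zsign x e : expgz x (zsign e) = signpow x e.
Proof. by case: e. Qed.

Lemma expgzD1 x (n : int) : expgz x (n + 1)%R = x * expgz x n.
Proof.
case: n => [k|[|k]]; first by rewrite -PoszD addn1 /= expgS.
  by rewrite /= mulgV.
have -> : (Negz k.+1 + 1 = Negz k)%R by rewrite !NegzE; lia.
by rewrite /= [x^-1 ^+ k.+2]expgS mulVKg.
Qed.

Lemma expgz_zsignD x e (n : int) : expgz x (n + zsign e)%R = signpow x e * expgz x n.
Proof.
case: e; first exact: expgzD1.
by rewrite /= -[n in RHS](GRing.subrK 1%R) expgzD1 mulKg.
Qed.

Lemma conj_agreeE x y M : conj_agree x y M <-> commute (y^-1 * x) M.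
Proof.
rewrite /conj_agree /commute; split=> [agree | yVx_M].
  have -> : y^-1 * x * M = y^-1 * (x * M * x^-1) * x by gsimpl.
  by rewrite agree; gsimpl.
have -> : x * M * x^-1 = y * (y^-1 * x * M) * x^-1 by gsimpl.
by rewrite yVx_M; gsimpl.
Qed.

Lemma conj_agreeV x y M : commute x y -> conj_agree x^-1 y^-1 M <-> conj_agree x y M.
Proof.
move=> xy; rewrite !conj_agreeE invgK.
have -> : y * x^-1 = (y^-1 * x)^-1 by rewrite invgM invgK; apply/commuteV/commute_sym.
split=> [/commute_sym/commuteV | /commute_sym/commuteV]; rewrite ?invgK; exact: commute_sym.
Qed.

Lemma conj_agree_invg x y M : conj_agree x y M -> conj_agree x y M^-1.
Proof. by move/conj_agreeE/commuteV/conj_agreeE. Qed.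

Lemma conj_agree_signpow x y M e :
  commute x y -> conj_agree x y M -> conj_agree (signpow x e) (signpow y e) M.
Proof. by case: e => //= /conj_agreeV <-. Qed.

End GroupIdentities.

Section PowerCommutators.
Local Open Scope group_scope.
Variables (G : groupType) (x y b b' : G).
Hypothesis xy : commute x y.
Hypothesis gcomm_signpow : forall e, gcomm (signpow x e) b = gcomm (signpow y e) b'.

Lemma gcomm_expg_agree k :
  gcomm (x ^+ k) b = gcomm (y ^+ k) b' /\ conj_agree x y (gcomm (x ^+ k) b).
Proof.
elim: k => [|k [IHeq IHagree]].
  by rewrite !expg0 !gcomm1g; split=> //; rewrite /conj_agree; gsimpl.
have gcommS : gcomm (x ^+ k.+1) b = gcomm (y ^+ k.+1) b'.
  by rewrite !expgS !gcommMl IHagree IHeq (gcomm_signpow true).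
split=> //; apply/(conj_agreeV _ xy).
rewrite /conj_agree {2}gcommS !conj_gcomm !expgS !mulKg.
by rewrite IHeq (gcomm_signpow false).
Qed.

End PowerCommutators.

Lemma gcomm_expgz_agree (G : groupType) (x y b b' : G) :
  commute x y -> (forall e, gcomm (signpow x e) b = gcomm (signpow y e) b') ->
  forall n, gcomm (expgz x n) b = gcomm (expgz y n) b' /\
            conj_agree x y (gcomm (expgz x n) b).
Proof.
move=> xy gcomm_signpow [k|k] /=; first exact: gcomm_expg_agree.
have gcommV_signpow e : gcomm (signpow x^-1 e) b = gcomm (signpow y^-1 e) b'.
  by rewrite !signpowV.
have [-> agree] := gcomm_expg_agree (commute_signpow false false xy) gcommV_signpow k.+1.
by split=> //; apply/(conj_agreeV _ xy).
Qed.

Section Evaluation.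
Local Open Scope group_scope.
Variables (G : groupType) (a1 a2 : G).

Definition leval (l : letter 2) : G := signpow (if nat_of_ord l.1 == 0 then a1 else a2) l.2.
Definition weval (w : word 2) : G := foldr (fun l g => leval l * g) 1 w.

Lemma leval_linv l : leval (linv l) = (leval l)^-1.
Proof. by case: l => i [] //=; rewrite /leval /= invgK. Qed.

Lemma weval_cat u v : weval (u ++ v) = weval u * weval v.
Proof. by elim: u => [|l u IHu] /=; rewrite ?mul1g // IHu mulgA. Qed.

Lemma weval_winv u : weval (winv u) = (weval u)^-1.
Proof.
elim: u => [|l u IHu]; first by rewrite invg1.
by rewrite winv_cons weval_cat IHu /= leval_linv mulg1 invgM.
Qed.

End Evaluation.

Section CrossRelations.
Local Open Scope group_scope.
Variables (G : groupType) (X1 X2 Y1 Y2 : G).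
Hypotheses (X1Y1 : commute X1 Y1) (X2Y2 : commute X2 Y2).
Hypothesis gcomm_cross : forall e1 e2,
  gcomm (signpow X1 e1) (signpow Y2 e2) = gcomm (signpow Y1 e1) (signpow X2 e2).

Local Notation T n m := (gcomm (expgz X1 n) (expgz Y2 m)).
Local Notation lx := (leval X1 X2).
Local Notation ly := (leval Y1 Y2).
Local Notation wx := (weval X1 X2).
Local Notation wy := (weval Y1 Y2).

Lemma gcomm_expgz_signpow_cross m e :
  gcomm (expgz Y2 m) (signpow X1 e) = gcomm (expgz X2 m) (signpow Y1 e).
Proof.
apply: (gcomm_expgz_agree (commute_sym X2Y2) _ m).1 => e'.
by rewrite -gcommV gcomm_cross gcommV.
Qed.

Lemma gcomm_expgz_cross n m :
  T n m = gcomm (expgz Y1 n) (expgz X2 m) /\ conj_agree X1 Y1 (T n m).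
Proof.
apply: (gcomm_expgz_agree X1Y1 _ n) => e.
by rewrite -gcommV gcomm_expgz_signpow_cross gcommV.
Qed.

Lemma gcomm_signpow_expgz_cross n e :
  gcomm (signpow Y2 e) (expgz X1 n) = gcomm (signpow X2 e) (expgz Y1 n).
Proof. by rewrite -!expgz_zsign -gcommV (gcomm_expgz_cross n _).1 gcommV. Qed.

Lemma conj_agree_cross n m e :
  conj_agree (signpow X1 e) (signpow Y1 e) (T n m) /\
  conj_agree (signpow X2 e) (signpow Y2 e) (T n m).
Proof.
split; apply: conj_agree_signpow => //; first exact: (gcomm_expgz_cross n m).2.
rewrite -[T n m]invgK gcommV; apply/conj_agree_invg/esym.
exact: (gcomm_expgz_agree (commute_sym X2Y2) (gcomm_signpow_expgz_cross n) m).2.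
Qed.

Inductive cross_span : G -> Prop :=
  | cross_span1 : cross_span 1
  | cross_spanT n m : cross_span (T n m)
  | cross_spanM M N : cross_span M -> cross_span N -> cross_span (M * N)
  | cross_spanV M : cross_span M -> cross_span M^-1.

Lemma cross_span_agree M e : cross_span M ->
  conj_agree (signpow X1 e) (signpow Y1 e) M /\
  conj_agree (signpow X2 e) (signpow Y2 e) M.
Proof.
rewrite !conj_agreeE.
elim=> [|n m|{}M N _ [M1 M2] _ [N1 N2]|{}M _ [M1 M2]].
- by split; apply: commute1.
- by rewrite -!conj_agreeE; apply: conj_agree_cross.
- by split; apply: commuteM.
- by split; apply: commuteV.
Qed.

Lemma cross_span_conj g :
  (forall n m, cross_span (g * T n m * g^-1)) ->
  forall M, cross_span M -> cross_span (g * M * g^-1).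
Proof.
move=> gT M; elim=> [|n m|{}M N _ gM _ gN|{}M _ gM].
- by rewrite mulg1 mulgV; apply: cross_span1.
- exact: gT.
- have -> : g * (M * N) * g^-1 = g * M * g^-1 * (g * N * g^-1) by gsimpl.
  exact: cross_spanM.
- by rewrite conj_invg; apply: cross_spanV.
Qed.

Lemma cross_span_conj_X1 e M :
  cross_span M -> cross_span (signpow X1 e * M * (signpow X1 e)^-1).
Proof.
apply: cross_span_conj => n m.
rewrite conj_gcomm -expgz_zsignD -expgz_zsign.
by apply: cross_spanM; [apply: cross_spanT | apply/cross_spanV/cross_spanT].
Qed.

Lemma cross_span_conj_Y2 e M :
  cross_span M -> cross_span (signpow Y2 e * M * (signpow Y2 e)^-1).
Proof.
apply: cross_span_conj => n m.
rewrite -gcommV conj_invg conj_gcomm -expgz_zsignD -expgz_zsign invgM invgK gcommV.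
by apply: cross_spanM; [rewrite -gcommV; apply/cross_spanV/cross_spanT | apply: cross_spanT].
Qed.

Lemma cross_span_letter l M : cross_span M ->
  cross_span (lx l * M * (lx l)^-1) /\ conj_agree (lx l) (ly l) M.
Proof.
move=> spanM; have [agree1 agree2] := cross_span_agree l.2 spanM.
rewrite /leval; case: (_ == 0); split=> //; first exact: cross_span_conj_X1.
by rewrite agree2; apply: cross_span_conj_Y2.
Qed.

Lemma gcomm_letter_cross a b :
  gcomm (ly a) (lx b) = gcomm (lx a) (ly b) /\ cross_span (gcomm (lx a) (ly b)).
Proof.
have commute_trivial (x y : G) e1 e2 : commute x y ->
    gcomm (signpow y e1) (signpow x e2) = 1 /\ gcomm (signpow x e1) (signpow y e2) = 1.
  by move=> xy; split; apply/eqP/gcomm_eq1P/commute_signpow; last apply: commute_sym.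
rewrite /leval; case: (_ == 0); case: (_ == 0).
- by have [-> ->] := commute_trivial _ _ a.2 b.2 X1Y1; split=> //; apply: cross_span1.
- rewrite -gcomm_cross -!expgz_zsign; split=> //; exact: cross_spanT.
- rewrite -gcommV gcomm_cross gcommV; split=> //.
  by rewrite -gcommV -gcomm_cross -!expgz_zsign; apply/cross_spanV/cross_spanT.
- by have [-> ->] := commute_trivial _ _ a.2 b.2 X2Y2; split=> //; apply: cross_span1.
Qed.

Lemma gcomm_weval_letter_cross V b :
  gcomm (wy V) (lx b) = gcomm (wx V) (ly b) /\
  cross_span (gcomm (wx V) (ly b)).
Proof.
elim: V => [|a V [IHeq IHspan]] /=.
  by rewrite !gcomm1g; split=> //; apply: cross_span1.
have [abeq abspan] := gcomm_letter_cross a b.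
have [conj_span agree] := cross_span_letter a IHspan.
rewrite !gcommMl IHeq -agree abeq; split=> //.
exact: cross_spanM.
Qed.

Lemma gcomm_weval_cross V W :
  gcomm (wy V) (wx W) = gcomm (wx V) (wy W) /\
  cross_span (gcomm (wx V) (wy W)).
Proof.
elim: W => [|b W [IHeq IHspan]] /=.
  by rewrite !gcommg1; split=> //; apply: cross_span1.
have [bVeq bVspan] := gcomm_weval_letter_cross V b.
have [conj_span agree] := cross_span_letter b IHspan.
rewrite !gcommMr IHeq agree bVeq; split=> //.
by apply: cross_spanM => //; rewrite -agree.
Qed.

Lemma commute_letter l : commute (lx l) (ly l).
Proof. by rewrite /leval; case: (_ == 0); apply: commute_signpow. Qed.

Lemma commute_weval u : commute (wx u) (wy u).
Proof.
elim: u => [|a u IHu] /=; first exact: commute1.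
have [/= aVu _] := gcomm_weval_cross [:: linv a] u.
rewrite !mulg1 !leval_linv in aVu; rewrite /commute.
have -> : lx a * wx u * (ly a * wy u) = lx a * ly a * gcomm (ly a)^-1 (wx u) * (wx u * wy u).
  by rewrite /gcomm; gsimpl.
by rewrite aVu IHu /gcomm (commute_letter a); gsimpl.
Qed.

Lemma weval_key_identities v w :
  let P := wx w in let Q := wy w in
  let A1 := wy v * P * (wy v)^-1 in let A2 := wx v * Q * (wx v)^-1 in
  let E := Q^-1 * P in
  [/\ commute P Q, A1 = A2 * E & commute E A2].
Proof.
move=> P Q A1 A2 E; have PQ : commute P Q by apply: commute_weval.
have A1E : A1 = A2 * E.
  have -> : A1 = gcomm (wy v) P * P by rewrite /gcomm; gsimpl.
  by rewrite (gcomm_weval_cross v w).1 /gcomm /A2 /E /Q; gsimpl.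
have key : A1^-1 * P = A2^-1 * Q.
  by move: (gcomm_weval_cross v (winv w)).1; rewrite !weval_winv /gcomm /A1 /A2; gsimpl.
split=> //; rewrite -[A2]invgK; apply: commuteV; rewrite /commute.
have -> : E * A2^-1 = E * (A2^-1 * Q) * Q^-1 by gsimpl.
by rewrite -key A1E invgM; gsimpl; rewrite -!mulgA (commuteV PQ).
Qed.

End CrossRelations.

Section Transfer.
Local Open Scope group_scope.
Implicit Types (u v w : word 4).

Lemma toK_rel r : r \in relK -> toK r = 1.
Proof. by move/area_le_rel=> r1; apply/eqK_toK; exists 1%N; rewrite /area_eq cats0. Qed.

Lemma toK_comm u v : toK (comm u v) = gcomm (toK u) (toK v).
Proof. by rewrite /comm !toK_cat !toK_winv /gcomm !mulgA. Qed.

Lemma toK_gpow u e : toK (gpow u e) = signpow (toK u) e.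
Proof. by case: e => //=; rewrite toK_winv. Qed.

Lemma toK_subst (w : word 2) u1 u2 : toK (subst w u1 u2) = weval (toK u1) (toK u2) w.
Proof.
elim: w => [|[i e] w IHw] //=.
rewrite /subst /= -/(subst w u1 u2) toK_cat IHw /leval /=.
by case: (_ == 0); case: e; rewrite //= toK_winv.
Qed.

Lemma commute_toK u v : comm u v \in relK -> commute (toK u) (toK v).
Proof. by move/toK_rel; rewrite toK_comm => /eqP/gcomm_eq1P. Qed.

Lemma toK_gcomm_cross e1 e2 :
  gcomm (signpow (toK x1) e1) (signpow (toK y2) e2) =
  gcomm (signpow (toK y1) e1) (signpow (toK x2) e2).
Proof.
have relr : comm (gpow x1 e1) (gpow y2 e2) ++ comm (gpow x2 e2) (gpow y1 e1) \in relK.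
  by rewrite mem_cat; apply/orP; right; apply/mapP; exists (e1, e2); case: e1; case: e2.
move/toK_rel/eqP: relr; rewrite toK_cat !toK_comm !toK_gpow mulg_eq1 => /eqP ->.
exact: gcommV.
Qed.

End Transfer.

Section KeyRelations.
Local Open Scope group_scope.
Implicit Types v w : word 2.

Definition key_area_le v w k : Prop :=
  let P := subst w x1 x2 in let Q := subst w y1 y2 in
  let A1 := subst v y1 y2 ++ P ++ winv (subst v y1 y2) in
  let A2 := subst v x1 x2 ++ Q ++ winv (subst v x1 x2) in
  let E := winv Q ++ P in
  [/\ area_eq k (P ++ Q) (Q ++ P), area_eq k A1 (A2 ++ E) & area_eq k (E ++ A2) (A2 ++ E)].

Lemma key_area_le_leq v w k k' : k <= k' -> key_area_le v w k -> key_area_le v w k'.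
Proof. by move=> kk' [PQ A1E EA2]; split; apply: area_eq_leq kk' _. Qed.

Lemma key_area_le_exists v w : exists k, key_area_le v w k.
Proof.
have rel2 : comm x2 y2 \in relK by rewrite mem_cat inE mem_head orbT.
have [PQ A1E EA2] := weval_key_identities (commute_toK (mem_head _ _))
  (commute_toK rel2) toK_gcomm_cross v w.
rewrite -!toK_subst in PQ A1E EA2.
set P := subst w x1 x2 in PQ A1E EA2 *; set Q := subst w y1 y2 in PQ A1E EA2 *.
set Vx := subst v x1 x2 in A1E EA2 *; set Vy := subst v y1 y2 in A1E *.
have [k1 PQk] : eqK (P ++ Q) (Q ++ P) by apply/eqK_toK; rewrite !toK_cat.
have [k2 A1Ek] : eqK (Vy ++ P ++ winv Vy) ((Vx ++ Q ++ winv Vx) ++ winv Q ++ P).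
  by apply/eqK_toK; rewrite !toK_cat !toK_winv !mulgA A1E !mulgA.
have [k3 EA2k] :
    eqK ((winv Q ++ P) ++ Vx ++ Q ++ winv Vx) ((Vx ++ Q ++ winv Vx) ++ winv Q ++ P).
  by apply/eqK_toK; rewrite !toK_cat !toK_winv !mulgA; move: EA2; rewrite /commute !mulgA.
exists (k1 + k2 + k3).
by split; [apply: area_eq_leq PQk | apply: area_eq_leq A1Ek | apply: area_eq_leq EA2k]; lia.
Qed.

End KeyRelations.

Fixpoint words_upto (k : nat) : seq (word 2) :=
  if k is k'.+1 then [::] :: [seq l :: w | l <- enum {: letter 2}, w <- words_upto k']
  else [:: [::]].

Lemma mem_words_upto k (w : word 2) : size w <= k -> w \in words_upto k.
Proof.
elim: k w => [|k IHk] [|l w] //= wk.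
rewrite inE; apply/orP; right.
by apply: (allpairs_f (fun l w => l :: w)); rewrite ?mem_enum ?IHk.
Qed.

Lemma bound_on_seq (T : eqType) (s : seq T) (P : T -> nat -> Prop) :
  (forall x k k', k <= k' -> P x k -> P x k') ->
  (forall x, x \in s -> exists k, P x k) -> exists K, forall x, x \in s -> P x K.
Proof.
move=> Pmono; elim: s => [|y s IHs] Ps; first by exists 0.
have [K PK] := IHs (fun x xs => Ps x (mem_behead (s := y :: s) xs)).
have [k Pk] := Ps y (mem_head y s).
exists (K + k) => x; rewrite inE => /predU1P[->|xs].
  exact: Pmono (leq_addl K k) Pk.
exact: Pmono (leq_addr k K) (PK x xs).
Qed.

Lemma key_area_le_uniform m : exists K,
  forall v w : word 2, size v <= m -> size w <= m -> key_area_le v w K.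
Proof.
have [|[v w] _|K HK] := @bound_on_seq _ [seq (v, w) | v <- words_upto m, w <- words_upto m]
  (fun p k => key_area_le p.1 p.2 k).
- by move=> p k k'; apply: key_area_le_leq.
- exact: key_area_le_exists.
exists K => v w vm wm; apply: (HK (v, w)).
by apply: allpairs_f; apply: mem_words_upto.
Qed.

Section Powers.
Implicit Types (u v g a b : word 4).

Lemma wpowS u N : wpow u N.+1 = u ++ wpow u N.
Proof. by []. Qed.

Lemma wpow_catC u N : wpow u N ++ u = u ++ wpow u N.
Proof. by elim: N => [|N IHN] /=; rewrite ?cats0 // -catA IHN. Qed.

Lemma wpow_winv u N : winv (wpow u N) = wpow (winv u) N.
Proof. by elim: N => [|N IHN] //=; rewrite winv_cat IHN wpow_catC. Qed.

Lemma winv_comm a b : winv (comm a b) = comm b a.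
Proof. by rewrite /comm !winv_cat !winvK !catA. Qed.

Lemma feq_conj_wpow g u N : feq (g ++ wpow u N ++ winv g) (wpow (g ++ u ++ winv g) N).
Proof.
elim: N => [|N IHN] /=; first exact: feq_catV.
apply: feq_trans (feq_cat (feq_refl _) IHN).
by have := feq_cancelV (g ++ u) g (wpow u N ++ winv g); rewrite -!catA.
Qed.

Lemma area_eq_wpow_commute k a b N :
  area_eq k (b ++ a) (a ++ b) -> area_eq (N * k) (wpow b N ++ a) (a ++ wpow b N).
Proof.
move=> ba; elim: N => [|N IHN]; first by rewrite /= cats0; apply: area_eq_refl.
have baN : area_eq k (b ++ a ++ wpow b N) (a ++ b ++ wpow b N).
  by move: (area_eq_catr (wpow b N) ba); rewrite -!catA.
rewrite mulSn addnC wpowS -catA.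
exact: area_eq_trans (area_eq_catl b IHN) baN.
Qed.

Lemma area_eq_wpow_cat k a b N : area_eq k (b ++ a) (a ++ b) ->
  area_eq (N * N * k) (wpow (a ++ b) N) (wpow a N ++ wpow b N).
Proof.
move=> ba; elim: N => [|N IHN]; first exact: area_eq_refl.
have step := area_eq_catr (wpow b N) (area_eq_catl a
  (area_eq_sym (area_eq_wpow_commute N (area_eq_sym ba)))).
rewrite -!catA in step.
have IHN' := area_eq_catl (a ++ b) IHN; rewrite -!catA in IHN'.
rewrite !wpowS -!catA; apply: area_eq_leq (area_eq_trans IHN' step); nia.
Qed.

Lemma area_eq_commuteV k a b :
  area_eq k (a ++ b) (b ++ a) -> area_eq k (a ++ winv b) (winv b ++ a).
Proof.
move=> ab.
have h := area_eq_sym (area_eq_catr (winv b) (area_eq_catl (winv b) ab)).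
rewrite -!catA in h; apply: area_eq_feql (area_eq_feqr h _).
  exact/feq_sym/(feq_cancelV [::]).
by apply: feq_sym; have := feq_cancel (winv b ++ a) b [::]; rewrite !cats0 -!catA.
Qed.

Lemma feq_comm_wpow (Vy Vx P Q : word 4) N :
  feq (comm Vy (wpow P N) ++ winv (comm Vx (wpow Q N)))
      (wpow (Vy ++ P ++ winv Vy) N ++ winv (wpow P N) ++ wpow Q N ++
       winv (wpow (Vx ++ Q ++ winv Vx) N)).
Proof.
have -> : comm Vy (wpow P N) ++ winv (comm Vx (wpow Q N)) =
    (Vy ++ wpow P N ++ winv Vy) ++ winv (wpow P N) ++ wpow Q N ++
    winv (Vx ++ wpow Q N ++ winv Vx).
  by rewrite winv_comm /comm !winv_cat winvK -!catA.
apply: feq_cat; first exact: feq_conj_wpow.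
by do 2!apply: feq_cat => //; apply/feq_winv/feq_conj_wpow.
Qed.

Lemma area_le_comm_wpow k (Vy Vx P Q : word 4) N :
  let A1 := Vy ++ P ++ winv Vy in
  let A2 := Vx ++ Q ++ winv Vx in
  let E := winv Q ++ P in
  area_eq k (P ++ Q) (Q ++ P) -> area_eq k A1 (A2 ++ E) -> area_eq k (E ++ A2) (A2 ++ E) ->
  area_le (comm Vy (wpow P N) ++ winv (comm Vx (wpow Q N))) (3 * k * N ^ 2).
Proof.
move=> A1 A2 E PQ A1E EA2.
have A1N : area_eq (N * k + (N * N * k + N * N * k))
                   (wpow A1 N) (wpow A2 N ++ wpow (winv Q) N ++ wpow P N).
  apply: area_eq_trans (area_eq_wpow N A1E) _.
  apply: area_eq_trans (area_eq_wpow_cat N EA2) _.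
  exact/area_eq_catl/area_eq_wpow_cat/area_eq_commuteV.
have W1 : area_eq (N * k + (N * N * k + N * N * k))
                  (comm Vy (wpow P N) ++ winv (comm Vx (wpow Q N))) [::].
  apply: area_eq_feql (feq_comm_wpow Vy Vx P Q N) _.
  apply: area_eq_feqr (area_eq_catr _ A1N) _.
  rewrite -wpow_winv -!catA; apply: feq_sym.
  have := feq_cancel (wpow A2 N ++ winv (wpow Q N)) (wpow P N) (wpow Q N ++ winv (wpow A2 N)).
  rewrite -!catA => /feq_trans; apply.
  exact: feq_trans (feq_cancelV (wpow A2 N) (wpow Q N) _) (feq_catV _).
move: W1; rewrite /area_eq cats0; apply: area_le_leq.
have NkNNk : N * k <= N * N * k.
  by case: (posnP N) => [-> // | N_gt0]; rewrite -mulnA leq_pmull.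
by rewrite expnS expn1; nia.
Qed.

End Powers.

Theorem lemma4p4 (m : nat) :
  exists C : nat, 0 < C /\
    forall (v w : word 2), size v <= m -> size w <= m ->
    forall N : nat,
      let W := comm (subst v y1 y2) (wpow (subst w x1 x2) N) ++
               winv (comm (subst v x1 x2) (wpow (subst w y1 y2) N)) in
      trivial_in_K W /\ area_le W (C * N ^ 2).
Proof.
have [K keyK] := key_area_le_uniform m.
exists (3 * K + 1); split=> [|v w vm wm N W]; first by rewrite addn1.
have [PQ A1E EA2] := keyK v w vm wm.
have W_area : area_le W (3 * K * N ^ 2) := area_le_comm_wpow N PQ A1E EA2.
split; first by exists (3 * K * N ^ 2).
by apply: area_le_leq W_area; rewrite mulnDl leq_addr.
Qed.
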